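(* There exist finite sets $\mathcal{X},\mathcal{Y}$, a closed convex model class $\Pi\subseteq\Pi_{\mathrm{all}}$, an involution $\Phi$ on $\mathcal{X}$ defining a nontrivial coherence set $\mathcal{C}_{\mathrm{coh}}$, a source model $\pi_0\colon\mathcal{X}\to\Delta(\mathcal{Y})$ with $\pi_0\notin\Pi$, and a convex family $\mathcal{F}$ of Legendre generators such that the minimax solution $$\pi^*_{mm}=\arg\min_{\pi\in\Pi\cap\mathcal{C}_{\mathrm{coh}}}\max_{F\in\mathcal{F}}\mathsf{B}_F(\pi\parallel\pi_0)$$ is unique and there exist $F\in\mathcal{F}$ and $\pi^*\in\Pi\cap\mathcal{C}_{\mathrm{coh}}$ with $\mathsf{B}_F(\pi^*\parallel\pi^*_{mm})>\mathsf{B}_F(\pi^*\parallel\pi_0)$.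
   Context: A model is a map $\pi\colon\mathcal{X}\to\Delta(\mathcal{Y})$, identified with a vector in $\mathbb{R}^{\mathcal{X}\times\mathcal{Y}}$; $\Pi_{\mathrm{all}}=\Delta(\mathcal{Y})^{\mathcal{X}}$; $\mathcal{C}_{\mathrm{coh}}=\{\pi\in\Pi_{\mathrm{all}}:\pi(x)=\pi(\Phi(x))\ \forall x\}$. For a generator $F$ on $\mathbb{R}^{\mathcal{X}\times\mathcal{Y}}$, $\mathsf{B}_F(\pi\parallel\pi')=F(\pi)-F(\pi')-\langle\nabla F(\pi'),\pi-\pi'\rangle$. A Legendre generator is a proper closed convex function differentiable on the interior of its domain whose gradient is a bijection onto the interior of the domain of its conjugate. *)

From HB Require Import structures.
From mathcomp Require Import all_boot all_order all_algebra.
From mathcomp Require Import all_classical all_reals all_analysis.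
From mathcomp Require Export Rstruct.
From Stdlib Require Import ClassicalEpsilon.
Set Implicit Arguments. Unset Strict Implicit. Unset Printing Implicit Defensive.
Import Order.TTheory GRing.Theory Num.Theory.
Local Open Scope ring_scope.
Local Open Scope classical_set_scope.

Section Defs.
Variables (R : realType) (X Y : finType).

(* vectors of R^{X x Y}; a model pi : X -> Delta(Y) is such a vector *)
Definition vec := X -> Y -> R.

Definition inner (a b : vec) : R := \sum_(x : X) \sum_(y : Y) a x y * b x y.
Definition vsub (a b : vec) : vec := fun x y => a x y - b x y.
Definition vcomb (t : R) (a b : vec) : vec := fun x y => t * a x y + (1 - t) * b x y.
(* l1 norm on R^{X x Y} (all norms are equivalent in finite dimension) *)
Definition l1 (a : vec) : R := \sum_(x : X) \sum_(y : Y) `|a x y|.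

Definition Pi_all : set vec :=
  [set p | (forall x y, 0 <= p x y) /\ (forall x, \sum_(y : Y) p x y = 1)].

Definition C_coh (Phi : X -> X) : set vec :=
  [set p | Pi_all p /\ (forall x, p x = p (Phi x))].

Definition vclosed (S : set vec) : Prop :=
  forall p, (forall e : R, 0 < e -> exists q, S q /\ l1 (vsub q p) < e) -> S p.
Definition vinterior (S : set vec) : set vec :=
  [set p | exists2 e : R, 0 < e & forall q, l1 (vsub q p) < e -> S q].
Definition vconvex (S : set vec) : Prop :=
  forall p q (t : R), S p -> S q -> 0 <= t <= 1 -> S (vcomb t p q).

Definition dom (F : vec -> \bar R) : set vec := [set p | (F p < +oo)%E].
Definition proper_fun (F : vec -> \bar R) : Prop :=
  (forall p, F p <> -oo%E) /\ (exists p, dom F p).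
Definition convex_fun (F : vec -> \bar R) : Prop :=
  forall p q (t : R), dom F p -> dom F q -> 0 <= t <= 1 ->
    (F (vcomb t p q) <= (t * fine (F p) + (1 - t) * fine (F q))%:E)%E.
(* closed = lower semicontinuous = all sublevel sets closed *)
Definition closed_fun (F : vec -> \bar R) : Prop :=
  forall a : R, vclosed [set p | (F p <= a%:E)%E].

Definition diff_at (F : vec -> \bar R) (p g : vec) : Prop :=
  (exists2 e : R, 0 < e & forall q, l1 (vsub q p) < e -> F q \is a fin_num) /\
  (forall eps : R, 0 < eps -> exists2 d : R, 0 < d & forall q, l1 (vsub q p) < d ->
     `|fine (F q) - fine (F p) - inner g (vsub q p)| <= eps * l1 (vsub q p)).

(* the gradient of F at p (meaningful where F is differentiable) *)
Definition grad (F : vec -> \bar R) (p : vec) : vec :=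
  epsilon (inhabits (fun _ _ => 0 : R)) (fun g => diff_at F p g).

Definition conjugate (F : vec -> \bar R) : vec -> \bar R :=
  fun y => ereal_sup [set ((inner p y)%:E - F p)%E | p in [set: vec]].

Definition legendre (F : vec -> \bar R) : Prop :=
  [/\ proper_fun F, convex_fun F /\ closed_fun F,
      (forall p, vinterior (dom F) p -> diff_at F p (grad F p)),
      (forall p q, vinterior (dom F) p -> vinterior (dom F) q ->
          grad F p = grad F q -> p = q)
    & grad F @` vinterior (dom F) = vinterior (dom (conjugate F))].

Definition bregman (F : vec -> \bar R) (p q : vec) : \bar R :=
  (F p - F q - (inner (grad F q) (vsub p q))%:E)%E.

Definition fam_convex (fam : set (vec -> \bar R)) : Prop :=
  forall F G (t : R), fam F -> fam G -> 0 <= t <= 1 ->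
    fam (fun p => (t%:E * F p + (1 - t)%:E * G p)%E).

Definition mm_objective (fam : set (vec -> \bar R)) (pi0 pi : vec) : \bar R :=
  ereal_sup [set bregman F pi pi0 | F in fam].

Definition is_minimax (Pi : set vec) (Phi : X -> X) (fam : set (vec -> \bar R))
    (pi0 pi : vec) : Prop :=
  (Pi `&` C_coh Phi) pi /\
  forall q, (Pi `&` C_coh Phi) q -> (mm_objective fam pi0 pi <= mm_objective fam pi0 q)%E.

End Defs.

From HB Require Import structures.
From mathcomp Require Import all_boot all_order all_algebra.
From mathcomp Require Import all_classical all_reals all_analysis.
From mathcomp Require Import Rstruct.
From mathcomp Require Import ring lra.
From Stdlib Require Import ClassicalEpsilon.
Set Implicit Arguments. Unset Strict Implicit. Unset Printing Implicit Defensive.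
Import Order.TTheory GRing.Theory Num.Theory.
Local Open Scope ring_scope.
Local Open Scope classical_set_scope.

(* Take X = Y = bool, Phi = negb, Pi = C_coh negb, and for pi0 the incoherent
   model sending x to the point mass at ~~ x.  The family consists of the
   weighted quadratic generators F_w(p) = sum w p^2 with row weights
   (4 - 3t, 1 + 3t), t in [0, 1]; they are Legendre and their Bregman
   divergence is the weighted squared distance.  A coherent model has the same
   row (a, 1 - a) everywhere; its divergences from pi0 for t = 0 and t = 1
   average to 5/2 + 5/2 (2a - 1)^2, while for a = 1/2 every member of the
   family gives exactly 5/2.  Hence the uniform model is the unique minimax
   solution.  But for t = 1 the coherent model with rows (1, 0) is at
   divergence 2 from pi0 and 5/2 from the uniform model. *)

Lemma eq_of_dist_le (R : numFieldType) (a b : R) :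
  (forall e, 0 < e -> `|a - b| <= e) -> a = b.
Proof.
move=> small; apply/eqP; rewrite -subr_eq0 -normr_le0.
by apply/ler_addgt0Pr => e /small; rewrite add0r.
Qed.

Section Vectors.
Variables (R : realType) (X Y : finType).
Local Notation vec := (vec R X Y).

Lemma l1_ge0 (v : vec) : 0 <= l1 v.
Proof. by apply: sumr_ge0 => x _; apply: sumr_ge0. Qed.

Lemma normr_row_le_l1 (v : vec) x : \sum_y `|v x y| <= l1 v.
Proof.
rewrite /l1 (bigD1 x) //= lerDl.
by apply: sumr_ge0 => x' _; apply: sumr_ge0.
Qed.

Lemma normr_coord_le_l1 (v : vec) x y : `|v x y| <= l1 v.
Proof.
apply: le_trans (normr_row_le_l1 v x).
by rewrite (bigD1 y) //= lerDl; apply: sumr_ge0.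
Qed.

Lemma normr_inner_le (g v : vec) : `|inner g v| <= l1 g * l1 v.
Proof.
rewrite /inner /l1 mulr_suml.
apply: le_trans (ler_norm_sum _ _ _) _; apply: ler_sum => x _.
rewrite mulr_suml; apply: le_trans (ler_norm_sum _ _ _) _; apply: ler_sum => y _.
by rewrite normrM ler_wpM2l ?normr_coord_le_l1.
Qed.

Lemma vinteriorT : vinterior [set: vec] = [set: vec].
Proof. by apply/seteqP; split => p // _; exists 1. Qed.

Definition bump (s : R) x y : vec :=
  fun x' y' => if (x' == x) && (y' == y) then s else 0.

Lemma sum_bump (f : vec) x y :
  \sum_x' \sum_y' (if (x' == x) && (y' == y) then f x' y' else 0) = f x y.
Proof.
rewrite (bigD1 x) //= eqxx -big_mkcond big_pred1_eq big1 ?addr0 //.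
by move=> x' /negbTE x'x; apply: big1 => y'; rewrite x'x.
Qed.

Lemma inner_bump (g : vec) s x y : inner g (bump s x y) = g x y * s.
Proof.
rewrite -(sum_bump (fun x' y' => g x' y' * s) x y); apply: eq_bigr => x' _.
by apply: eq_bigr => y' _; rewrite /bump; case: ifP; rewrite ?mulr0.
Qed.

Lemma l1_bump s x y : l1 (bump s x y) = `|s|.
Proof.
rewrite -(sum_bump (fun _ _ => `|s|) x y); apply: eq_bigr => x' _.
by apply: eq_bigr => y' _; rewrite /bump; case: ifP; rewrite ?normr0.
Qed.

Lemma diff_at_unique (F : vec -> \bar R) p g1 g2 :
  diff_at F p g1 -> diff_at F p g2 -> g1 = g2.
Proof.
move=> [_ D1] [_ D2]; apply/funext => x; apply/funext => y.
apply: eq_of_dist_le => e e0.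
have e20 : 0 < e / 2 by rewrite divr_gt0.
have [d1 d10 near1] := D1 _ e20; have [d2 d20 near2] := D2 _ e20.
pose s := Num.min d1 d2 / 2.
have s0 : 0 < s by rewrite divr_gt0 // lt_min d10 d20.
have [sd1 sd2] : s < d1 /\ s < d2.
  have : Num.min d1 d2 <= d1 by rewrite ge_min lexx.
  have : Num.min d1 d2 <= d2 by rewrite ge_min lexx orbT.
  by rewrite /s; split; lra.
pose q : vec := fun x' y' => p x' y' + bump s x y x' y'.
have qp : vsub q p = bump s x y.
  by apply/funext => x'; apply/funext => y'; rewrite /vsub /q addrAC subrr add0r.
move: (near1 q) (near2 q); rewrite qp l1_bump !inner_bump gtr0_norm //.
move=> /(_ sd1)/ler_normlP[? ?] /(_ sd2)/ler_normlP[? ?].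
have : `|(g1 x y - g2 x y) * s| <= e * s by apply/ler_normlP; split; lra.
by rewrite normrM (gtr0_norm s0) ler_pM2r.
Qed.

Lemma grad_eq (F : vec -> \bar R) p g : diff_at F p g -> grad F p = g.
Proof.
by move=> Dg; apply: diff_at_unique (epsilon_spec _ _ (ex_intro _ g Dg)) Dg.
Qed.

Lemma closed_fun_lower_bound (f : vec -> R) :
  (forall p, exists2 C, 0 <= C & forall q, f p - C * l1 (vsub q p) <= f q) ->
  closed_fun (fun p => (f p)%:E).
Proof.
move=> lb a p approx; rewrite /= lee_fin; have [C C0 lbp] := lb p.
apply/ler_addgt0Pr => e e0.
have eC : 0 < e / (C + 1) by rewrite divr_gt0 // ltr_wpDl.
have [q [/= fqa qp]] := approx _ eC; move: fqa (lbp q); rewrite lee_fin => fqa.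
have : C * l1 (vsub q p) <= e.
  apply: le_trans (ler_wpM2l C0 (ltW qp)) _.
  rewrite mulrA ler_pdivrMr ?ltr_wpDl //.
  by rewrite mulrC ler_wpM2l ?lerDl // ltW.
lra.
Qed.

Lemma approx_coord (S : set vec) p :
  (forall e, 0 < e -> exists q, S q /\ l1 (vsub q p) < e) ->
  forall e, 0 < e -> exists q, S q /\ forall x y, `|q x y - p x y| <= e.
Proof.
move=> approx e /approx[q [Sq qp]]; exists q; split => // x y.
exact: le_trans (normr_coord_le_l1 (vsub q p) x y) (ltW qp).
Qed.

Lemma vclosed_Pi_all : vclosed (@Pi_all R X Y).
Proof.
move=> p approx; split => [x y | x].
- apply/ler_addgt0Pr => e /(approx_coord approx)[q [[q0 _] qp]].
  by have := q0 x y; have /ler_normlP[? ?] := qp x y; lra.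
- apply: eq_of_dist_le => e /approx[q [[_ q1] qp]].
  rewrite -(q1 x) distrC -sumrB; apply: le_trans (ler_norm_sum _ _ _) _.
  exact: le_trans (normr_row_le_l1 (vsub q p) x) (ltW qp).
Qed.

Lemma vclosed_C_coh (Phi : X -> X) : vclosed (@C_coh R X Y Phi).
Proof.
move=> p approx; split.
  by apply: vclosed_Pi_all => e /approx[q [[Pq _] qp]]; exists q.
move=> x; apply/funext => y; apply: eq_of_dist_le => e e0.
have e20 : 0 < e / 2 by rewrite divr_gt0.
have [q [[_ /(_ x) qPhi] qp]] := approx_coord approx e20.
have := qp x y; have := qp (Phi x) y; rewrite qPhi => /ler_normlP[? ?] /ler_normlP[? ?].
by apply/ler_normlP; split; lra.
Qed.

Lemma vconvex_C_coh (Phi : X -> X) : vconvex (@C_coh R X Y Phi).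
Proof.
move=> p q t [[p0 p1] pPhi] [[q0 q1] qPhi] /andP[t0 t1]; split; last first.
  by move=> x; apply/funext => y; rewrite /vcomb pPhi qPhi.
split=> [x y | x]; first by rewrite /vcomb addr_ge0 // mulr_ge0 ?subr_ge0.
by rewrite big_split /= -!mulr_sumr p1 q1; ring.
Qed.

End Vectors.

Section WeightedQuadratic.
Variables (R : realType) (X Y : finType) (w : vec R X Y).
Hypothesis w_gt0 : forall x y, 0 < w x y.
Local Notation vec := (vec R X Y).

Definition wquad (p : vec) : R := \sum_x \sum_y w x y * p x y ^+ 2.
Definition wquad_gen (p : vec) : \bar R := (wquad p)%:E.
Definition wquad_grad (p : vec) : vec := fun x y => 2 * w x y * p x y.
Definition wdist2 (p q : vec) : R := \sum_x \sum_y w x y * (p x y - q x y) ^+ 2.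

Lemma wdist2_ge0 p q : 0 <= wdist2 p q.
Proof.
by apply: sumr_ge0 => x _; apply: sumr_ge0 => y _; rewrite mulr_ge0 ?sqr_ge0 ?ltW.
Qed.

Lemma wdist2_le p q : wdist2 q p <= l1 w * l1 (vsub q p) ^+ 2.
Proof.
rewrite /l1 !mulr_suml; apply: ler_sum => x _; rewrite !mulr_suml.
apply: ler_sum => y _; have w0 := ltW (w_gt0 x y).
rewrite ger0_norm // ler_wpM2l // -real_normK ?num_real //.
by rewrite lerXn2r ?nnegrE ?l1_ge0 ?normr_coord_le_l1.
Qed.

Lemma wquad_expand p q :
  wquad q = wquad p + inner (wquad_grad p) (vsub q p) + wdist2 q p.
Proof.
rewrite /wquad /inner /wdist2 -!big_split; apply: eq_bigr => x _.
rewrite -!big_split; apply: eq_bigr => y _; rewrite /wquad_grad /vsub /=; ring.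
Qed.

Lemma wquad_diff p : diff_at wquad_gen p (wquad_grad p).
Proof.
split=> [|eps eps0]; first by exists 1.
have W0 : 0 <= l1 w := l1_ge0 w.
exists (eps / (l1 w + 1)); first by rewrite divr_gt0 // ltr_wpDl.
move=> q qp; have -> : fine (wquad_gen q) - fine (wquad_gen p)
    - inner (wquad_grad p) (vsub q p) = wdist2 q p by rewrite /= (wquad_expand p q); ring.
rewrite ger0_norm ?wdist2_ge0 //; apply: le_trans (wdist2_le p q) _.
have L0 := l1_ge0 (vsub q p); move: qp; set L := l1 (vsub q p) => qp.
have WL : l1 w * L <= eps.
  move: qp; rewrite ltr_pdivlMr ?ltr_wpDl // => qp; nra.
by rewrite expr2 mulrA ler_wpM2r.
Qed.

Lemma grad_wquad p : grad wquad_gen p = wquad_grad p.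
Proof. exact/grad_eq/wquad_diff. Qed.

Lemma bregman_wquad p q : bregman wquad_gen p q = (wdist2 p q)%:E.
Proof.
by rewrite /bregman grad_wquad -!EFinB (wquad_expand q p); congr EFin; ring.
Qed.

Lemma dom_wquad : dom wquad_gen = [set: vec].
Proof. by apply/seteqP; split => p //= _; exact: ltry. Qed.

Lemma wquad_convex : convex_fun wquad_gen.
Proof.
move=> p q t _ _ /andP[t0 t1]; rewrite /= lee_fin /wquad !mulr_sumr -big_split.
apply: ler_sum => x _ /=; rewrite !mulr_sumr -big_split; apply: ler_sum => y _ /=.
have -> : t * (w x y * p x y ^+ 2) + (1 - t) * (w x y * q x y ^+ 2) =
  w x y * vcomb t p q x y ^+ 2 + w x y * t * (1 - t) * (p x y - q x y) ^+ 2.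
  by rewrite /vcomb; ring.
by rewrite lerDl mulr_ge0 ?sqr_ge0 // mulr_ge0 ?subr_ge0 // mulr_ge0 // ltW.
Qed.

Lemma wquad_closed : closed_fun wquad_gen.
Proof.
apply: closed_fun_lower_bound => p; exists (l1 (wquad_grad p)); first exact: l1_ge0.
move=> q; rewrite (wquad_expand p q) -addrA lerD2l.
have /ler_normlP[+ _] := normr_inner_le (wquad_grad p) (vsub q p).
have := wdist2_ge0 q p; lra.
Qed.

(* Fenchel-Young for each coordinate: [p v - w p^2 <= v^2 / (4 w)]. *)
Lemma conjugate_wquad_lt_pinfty v : (conjugate wquad_gen v < +oo)%E.
Proof.
apply: le_lt_trans (ltry (\sum_x \sum_y v x y ^+ 2 / (4 * w x y))).
apply: ge_ereal_sup => _ [p _ <-]; rewrite -EFinB lee_fin /inner /wquad -sumrB.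
apply: ler_sum => x _; rewrite -sumrB; apply: ler_sum => y _.
have wxy := w_gt0 x y.
have -> : v x y ^+ 2 / (4 * w x y) = p x y * v x y - w x y * p x y ^+ 2
    + (2 * w x y * p x y - v x y) ^+ 2 / (4 * w x y) by field; lra.
by rewrite lerDl divr_ge0 ?sqr_ge0 // mulr_ge0 // ltW.
Qed.

Lemma legendre_wquad : legendre wquad_gen.
Proof.
have w_neq0 x y : 2 * w x y != 0 by rewrite mulf_neq0 // gt_eqF.
split.
- by split=> //; exists (fun _ _ => 0); exact: ltry.
- by split; [exact: wquad_convex | exact: wquad_closed].
- by move=> p _; rewrite grad_wquad; exact: wquad_diff.
- move=> p q _ _; rewrite !grad_wquad => gpq.
  apply/funext => x; apply/funext => y; apply: (mulfI (w_neq0 x y)).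
  exact: (congr1 (fun g => g x y) gpq).
- have -> : dom (conjugate wquad_gen) = [set: vec].
    by apply/seteqP; split => v //= _; exact: conjugate_wquad_lt_pinfty.
  rewrite dom_wquad vinteriorT; apply/seteqP; split => // g _.
  exists (fun x y => g x y / (2 * w x y)) => //; rewrite grad_wquad.
  by apply/funext => x; apply/funext => y; rewrite /wquad_grad mulrC divfK.
Qed.

End WeightedQuadratic.

Lemma wquad_vcomb (R : realType) (X Y : finType) (t : R) (w1 w2 : vec R X Y) p :
  wquad (vcomb t w1 w2) p = t * wquad w1 p + (1 - t) * wquad w2 p.
Proof.
rewrite /wquad !mulr_sumr -big_split; apply: eq_bigr => x _ /=.
by rewrite !mulr_sumr -big_split; apply: eq_bigr => y _ /=; rewrite /vcomb; ring.
Qed.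

Section Counterexample.
Variable R : realType.
Local Notation V := (vec R bool bool).

Definition pi0 : V := fun x y => (x != y)%:R.
Definition coh (a : R) : V := fun _ y => if y then a else 1 - a.
Definition wt (t : R) : V := fun x _ => if x then 4 - 3 * t else 1 + 3 * t.
Definition fam : set (V -> \bar R) :=
  [set F | exists2 t : R, 0 <= t <= 1 & F = wquad_gen (wt t)].

Lemma Pi_all_pi0 : Pi_all pi0.
Proof.
split=> [x y | x]; first by rewrite ler0n.
by case: x; rewrite big_bool /= ?mulr0n ?mulr1n ?add0r ?addr0.
Qed.

Lemma pi0_notin_C_coh : ~ C_coh negb pi0.
Proof.
move=> [_ /(_ true) /(congr1 (fun f => f true)) /eqP].
by rewrite /pi0 /= eq_sym oner_eq0.
Qed.

Lemma C_coh_negb_neq_Pi_all : C_coh negb <> @Pi_all R bool bool.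
Proof. by move=> coh_all; apply: pi0_notin_C_coh; rewrite coh_all; exact: Pi_all_pi0. Qed.

Lemma C_coh_negb q : C_coh negb q -> q = coh (q true true).
Proof.
move=> [[_ q1] qnegb]; have qx x : q x = q true by case: x; rewrite // qnegb.
apply/funext => x; apply/funext => y; rewrite qx /coh; case: y => //.
by have := q1 true; rewrite big_bool /=; lra.
Qed.

Lemma C_coh_coh a : 0 <= a <= 1 -> C_coh negb (coh a).
Proof.
move=> /andP[a0 a1]; split=> //; split=> [x [] | x]; rewrite ?big_bool /=; lra.
Qed.

Lemma wt_gt0 t : 0 <= t <= 1 -> forall x y, 0 < wt t x y.
Proof. by move=> /andP[t0 t1] [] y /=; lra. Qed.

Lemma wt_vcomb t a b : wt (t * a + (1 - t) * b) = vcomb t (wt a) (wt b).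
Proof. by apply/funext => x; apply/funext => y; rewrite /vcomb /wt; case: x; ring. Qed.

Lemma fam_convex_fam : fam_convex fam.
Proof.
move=> _ _ t [a /andP[a0 a1] ->] [b /andP[b0 b1] ->] /andP[t0 t1].
exists (t * a + (1 - t) * b); first by apply/andP; split; nra.
by apply/funext => p; rewrite /wquad_gen wt_vcomb wquad_vcomb.
Qed.

Lemma fam_legendre F : fam F -> legendre F /\ forall p, vinterior (dom F) p.
Proof.
move=> [t t01 ->]; split; first exact/legendre_wquad/wt_gt0.
by move=> p; rewrite dom_wquad vinteriorT.
Qed.

Lemma bregman_wt_coh t a : 0 <= t <= 1 ->
  bregman (wquad_gen (wt t)) (coh a) pi0 =
    (2 * ((4 - 3 * t) * a ^+ 2 + (1 + 3 * t) * (1 - a) ^+ 2))%:E.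
Proof.
move=> t01; rewrite bregman_wquad; last exact: wt_gt0.
by rewrite /wdist2 !big_bool /= /pi0 /= ?mulr0n ?mulr1n; congr EFin; ring.
Qed.

(* The objective dominates the average of its values at [t = 0] and [t = 1]. *)
Lemma mm_objective_coh_ge a :
  ((5 / 2 + 5 / 2 * (2 * a - 1) ^+ 2)%:E <= mm_objective fam pi0 (coh a))%E.
Proof.
have ub t : 0 <= t <= 1 -> ((2 * ((4 - 3 * t) * a ^+ 2 + (1 + 3 * t) * (1 - a) ^+ 2))%:E
    <= mm_objective fam pi0 (coh a))%E.
  move=> t01; rewrite -bregman_wt_coh //; apply: ereal_sup_ubound.
  by exists (wquad_gen (wt t)) => //; exists t.
have t0 : 0 <= (0 : R) <= 1 by apply/andP; split; lra.
have t1 : 0 <= (1 : R) <= 1 by apply/andP; split; lra.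
move: (ub _ t0) (ub _ t1); rewrite !mulr0 !mulr1 !subr0 !addr0.
set b0 := 2 * _; set b1 := 2 * _ => ub0 ub1.
have [b01|b10] := leP b0 b1.
- by apply: le_trans ub1; rewrite lee_fin /b0 /b1 in b01 *; lra.
- by apply: le_trans ub0; rewrite lee_fin /b0 /b1 in b10 *; lra.
Qed.

Lemma mm_objective_half : (mm_objective fam pi0 (coh (1 / 2)) <= (5 / 2)%:E)%E.
Proof.
apply: ge_ereal_sup => _ [_ [t t01 ->] <-].
by rewrite bregman_wt_coh // lee_fin !expr2; lra.
Qed.

Lemma C_coh_half : C_coh negb (coh (1 / 2)).
Proof. by apply: C_coh_coh; apply/andP; split; lra. Qed.

Lemma is_minimax_half : is_minimax (C_coh negb) negb fam pi0 (coh (1 / 2)).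
Proof.
rewrite /is_minimax setIid; split=> [|q /C_coh_negb ->]; first exact: C_coh_half.
apply: le_trans mm_objective_half (le_trans _ (mm_objective_coh_ge _)).
by rewrite lee_fin; have := sqr_ge0 (2 * q true true - 1); lra.
Qed.

Lemma is_minimax_unique q :
  is_minimax (C_coh negb) negb fam pi0 q -> q = coh (1 / 2).
Proof.
rewrite /is_minimax setIid => -[/C_coh_negb qE /(_ _ C_coh_half) qmin].
move: (q true true) qE qmin => a -> qmin.
have := le_trans (mm_objective_coh_ge a) (le_trans qmin mm_objective_half).
rewrite lee_fin => mm_le.
by have -> : a = 1 / 2 by have := sqr_ge0 (2 * a - 1); nra.
Qed.

Lemma bregman_gap :
  (bregman (wquad_gen (wt 1)) (coh 1) pi0 <
   bregman (wquad_gen (wt 1)) (coh 1) (coh (1 / 2)))%E.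
Proof.
have t1 : 0 <= (1 : R) <= 1 by apply/andP; split; lra.
rewrite bregman_wt_coh // bregman_wquad; last exact: wt_gt0.
by rewrite lte_fin /wdist2 !big_bool /= !expr2; lra.
Qed.

End Counterexample.

Local Close Scope ring_scope.

Theorem theorem6 :
  exists (X Y : finType) (Pi : set (vec Rdefinitions.R X Y)) (Phi : X -> X)
         (pi0 : vec Rdefinitions.R X Y)
         (fam : set (vec Rdefinitions.R X Y -> \bar Rdefinitions.R)),
    [/\ [/\ Pi `<=` @Pi_all Rdefinitions.R X Y, vclosed Pi & vconvex Pi],
        (forall x, Phi (Phi x) = x) /\ C_coh Phi <> @Pi_all Rdefinitions.R X Y,
        Pi_all pi0 /\ ~ Pi pi0,
        fam_convex fam /\ (forall F, fam F -> legendre F /\ vinterior (dom F) pi0)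
      & exists pi_mm,
          [/\ is_minimax Pi Phi fam pi0 pi_mm,
              (forall q, is_minimax Pi Phi fam pi0 q -> q = pi_mm)
            & exists F pi_s,
                [/\ fam F, (Pi `&` C_coh Phi) pi_s, vinterior (dom F) pi_mm
                  & (bregman F pi_s pi0 < bregman F pi_s pi_mm)%E]]].
Proof.
exists bool, bool, (C_coh negb), negb, (@pi0 _), (@fam _).
have one01 : (0 <= (1 : Rdefinitions.R) <= 1)%R by apply/andP; split; lra.
split.
- by split; [move=> p [] | exact: vclosed_C_coh | exact: vconvex_C_coh].
- by split; [exact: negbK | exact: C_coh_negb_neq_Pi_all].
- by split; [exact: Pi_all_pi0 | exact: pi0_notin_C_coh].
- by split; [exact: fam_convex_fam | move=> F /fam_legendre[]].
- exists (coh (1 / 2)%R); split; [exact: is_minimax_half | exact: is_minimax_unique |].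
  exists (wquad_gen (wt 1%R)), (coh 1%R); split.
  + by exists 1%R.
  + by rewrite setIid; apply: C_coh_coh.
  + by rewrite dom_wquad vinteriorT.
  + exact: bregman_gap.
Qed.
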